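(* $M_{RC}^\mathcal{K}=(\Pi,\sigma,\gamma)$ is a model of $\mathcal{K}$.
   Context: DRSL setting: a ranked standpoint structure $M=(\Pi,\sigma,\gamma)$ has a nonempty set $\Pi$ of precisifications, $\sigma$ mapping each standpoint symbol to a nonempty subset of $\Pi$ with $\sigma( * )=\Pi$, and $\gamma$ mapping each precisification to a ranked interpretation (a convex function from classical valuations to $\mathds{N}\cup\{\infty\}$); $M,\pi\Vdash\phi$ iff $\gamma(\pi)\Vdash\phi$ for a propositional KLM formula $\phi$ ($\phi::=\alpha\mid\alpha\mathrel{|}\!\sim\beta\mid\phi\wedge\phi$), $M,\pi\Vdash\Box_s\psi$ (resp. $\Diamond_s\psi$) iff $\psi$ holds at all (resp. some) $\pi'\in\sigma(s)$, and $M\Vdash\psi$ iff it holds at every $\pi$; $M$ is a model of $\mathcal{K}$ if it satisfies every formula of $\mathcal{K}$. Let $\mathcal{K}$ be a DRSL knowledge base in normal form (formulas $\#_s\phi$, $\#\in\{\Box,\Diamond\}$, $\phi$ a KLM formula, plus sharpening statements $s_1\preceq s_2$), $S$ its set of standpoints, and $\preceq^+$ the reflexive-transitive closure of its sharpening statements (with $s\preceq^+*$). Define $K_s=\{\phi\mid\Box_t\phi\in\mathcal{K}, s\preceq^+t\}$ and $K_s^\phi=K_s\cup\{\phi\}$ for $\Diamond_s\phi\in\mathcal{K}$. For a propositional KLM knowledge base $K$, $R^K_{RC}$ is its rational closure ranked model (the minimum ranked model of $K$ under the pointwise order). Then $M_{RC}^\mathcal{K}$ has $\Pi=\{\pi_s\mid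 s\in S-\{*\}\}\cup\{\pi_s^\phi\mid\Diamond_s\phi\in\mathcal{K}\}$, $\sigma(s)=\{\pi_t\mid t\preceq^+s\}\cup\{\pi_t^\phi\mid t\preceq^+s\}$, $\gamma(\pi_s)=R^{K_s}_{RC}$, $\gamma(\pi_s^\phi)=R^{K_s^\phi}_{RC}$. *)

From mathcomp Require Import all_boot.
From Stdlib Require Import ClassicalEpsilon List.

Set Implicit Arguments.
Unset Strict Implicit.
Unset Printing Implicit Defensive.

Section Logic.
Variable P : finType.

Inductive pform : Type :=
  | PTop | PBot
  | PAtom of P
  | PNeg of pform
  | PAnd of pform & pform
  | POr of pform & pform
  | PImp of pform & pform
  | PIff of pform & pform.

Definition valuation := {ffun P -> bool}.

Fixpoint peval (u : valuation) (a : pform) : bool :=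
  match a with
  | PTop => true
  | PBot => false
  | PAtom p => u p
  | PNeg a => ~~ peval u a
  | PAnd a b => peval u a && peval u b
  | POr a b => peval u a || peval u b
  | PImp a b => peval u a ==> peval u b
  | PIff a b => peval u a == peval u b
  end.

Inductive klm : Type :=
  | KProp of pform
  | KCond of pform & pform
  | KAnd of klm & klm.

(* ranks in N u {oo}; None stands for oo *)
Definition rank := option nat.

Definition rank_le (a b : rank) : Prop :=
  match a, b with
  | _, None => True
  | None, Some _ => False
  | Some m, Some n => (m <= n)%N
  end.

Definition convex (r : valuation -> rank) : Prop :=
  forall u n, r u = Some n -> forall m, (m < n)%N -> exists v, r v = Some m.

Record rinterp : Type := RInterp {
  rk : valuation -> rank;
  rk_convex : convex rk }.

Fixpoint rsat (R : rinterp) (phi : klm) : Prop :=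
  match phi with
  | KProp a => forall u, rk R u <> None -> peval u a
  | KCond a b =>
      forall u n, rk R u = Some n -> peval u a ->
        (forall v m, rk R v = Some m -> peval v a -> (n <= m)%N) ->
        peval u b
  | KAnd p q => rsat R p /\ rsat R q
  end.

Definition rmodel (Kb : klm -> Prop) (R : rinterp) : Prop :=
  forall phi, Kb phi -> rsat R phi.

Definition rle (R1 R2 : rinterp) : Prop := forall u, rank_le (rk R1 u) (rk R2 u).

Definition minimum_model (Kb : klm -> Prop) (R : rinterp) : Prop :=
  rmodel Kb R /\ forall R', rmodel Kb R' -> rle R R'.

Definition rinterp_inf : rinterp.
Proof. by exists (fun _ => None) => u n. Defined.

Definition RC (Kb : klm -> Prop) : rinterp :=
  epsilon (inhabits rinterp_inf) (minimum_model Kb).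

End Logic.

Section DRSL.
Variable P : finType.
Variable St : Type.
Variable star : St.      (* the universal standpoint * *)

(* statements of a DRSL knowledge base in normal form *)
Inductive stmt : Type :=
  | SBox of St & klm P
  | SDia of St & klm P
  | SSharp of St & St.

Definition kb := list stmt.

Record rstruct : Type := RStruct {
  Pi : Type;
  sg : St -> Pi -> Prop;
  gm : Pi -> rinterp P }.
Arguments sg : clear implicits.
Arguments gm : clear implicits.

(* M, pi ||- statement (normal-form statements do not depend on pi) *)
Definition ssat (M : rstruct) (pi : Pi M) (st : stmt) : Prop :=
  match st with
  | SBox s phi => forall pi', sg M s pi' -> rsat (gm M pi') phi
  | SDia s phi => exists2 pi', sg M s pi' & rsat (gm M pi') phi
  | SSharp s1 s2 => forall pi', sg M s1 pi' -> sg M s2 pi'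
  end.
Arguments ssat : clear implicits.

Definition is_model (M : rstruct) (K : kb) : Prop :=
  forall st, In st K -> forall pi : Pi M, ssat M pi st.

Definition mentions (st : stmt) (s : St) : Prop :=
  match st with
  | SBox t _ | SDia t _ => t = s
  | SSharp t1 t2 => t1 = s \/ t2 = s
  end.

Definition in_S (K : kb) (s : St) : Prop :=
  s = star \/ exists2 st, In st K & mentions st s.

Inductive preceq (K : kb) : St -> St -> Prop :=
  | prec_refl s : preceq K s s
  | prec_stmt s1 s2 : In (SSharp s1 s2) K -> preceq K s1 s2
  | prec_trans s1 s2 s3 : preceq K s1 s2 -> preceq K s2 s3 -> preceq K s1 s3
  | prec_star s : preceq K s star.

Definition Ks (K : kb) (s : St) : klm P -> Prop :=
  fun phi => exists2 t, In (SBox t phi) K & preceq K s t.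

Definition Ksphi (K : kb) (s : St) (phi : klm P) : klm P -> Prop :=
  fun psi => Ks K s psi \/ psi = phi.

Inductive prec : Type :=
  | PiS of St
  | PiD of St & klm P.

Definition prec_st (p : prec) : St :=
  match p with PiS s => s | PiD s _ => s end.

Definition in_Pi (K : kb) (p : prec) : Prop :=
  match p with
  | PiS s => in_S K s /\ s <> star
  | PiD s phi => In (SDia s phi) K
  end.

Definition M_RC (K : kb) : rstruct :=
  {| Pi := {p : prec | in_Pi K p};
     sg := fun s p => preceq K (prec_st (proj1_sig p)) s;
     gm := fun p => match proj1_sig p with
                       | PiS s => RC (Ks K s)
                       | PiD s phi => RC (Ksphi K s phi)
                       end |}.

End DRSL.

(* Every precisification below s is interpreted by the rational closure of a
   knowledge base containing all Box_s formulas, sigma is built from the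
   closure of the sharpenings, and each diamond has its own witness pi_s^phi;
   so the theorem reduces to RC Kb being a model of Kb, i.e. to the existence
   of a minimum ranked model.  The pointwise least rank that any model gives a
   valuation is attained by some model, hence satisfies every formula true in
   all models, and lies below every model.  It need not be convex; replacing
   each rank by the number of smaller ranks in use closes the gaps while
   keeping the support and the relative order (hence satisfaction) and only
   lowering ranks. *)

From Stdlib Require Import ClassicalEpsilon.
From mathcomp Require Import all_boot.

Set Implicit Arguments.
Unset Strict Implicit.
Unset Printing Implicit Defensive.

Lemma rank_le_trans : forall a b c : rank, rank_le a b -> rank_le b c -> rank_le a c.
Proof. by move=> [a|] [b|] [c|] //=; apply: leq_trans. Qed.

Section RankedSemantics.
Variable P : finType.
Notation V := (valuation P).

(* [rsat] for rank functions that need not be convex, such as [inf_rank] below. *)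
Fixpoint rank_sat (r : V -> rank) (phi : klm P) : Prop :=
  match phi with
  | KProp a => forall u, r u <> None -> peval u a
  | KCond a b =>
      forall u n, r u = Some n -> peval u a ->
        (forall v m, r v = Some m -> peval v a -> (n <= m)%N) ->
        peval u b
  | KAnd p q => rank_sat r p /\ rank_sat r q
  end.

Lemma rsatE (R : rinterp P) phi : rsat R phi = rank_sat (rk R) phi.
Proof. by elim: phi => //= p -> q ->. Qed.

Lemma rank_sat_omap (r : V -> rank) (h : nat -> nat) :
  (forall u v n m, r u = Some n -> r v = Some m -> (h n <= h m) = (n <= m)) ->
  forall phi, rank_sat r phi -> rank_sat (fun u => omap h (r u)) phi.
Proof.
move=> h_mono; elim=> [a|a b|p IHp q IHq] /=.
- by move=> sat_a u; case ru: (r u) => //= _; apply: sat_a; rewrite ru.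
- move=> sat_ab u c + a_u; case ru: (r u) => [n|] //= [<-] min_u.
  apply: (sat_ab u n ru a_u) => v m rv a_v.
  by rewrite -(h_mono u v n m) //; apply: (min_u v); rewrite ?rv.
- by case=> /IHp ? /IHq.
Qed.

End RankedSemantics.

Lemma count_ltn_split (s : seq nat) m n : m <= n ->
  count (ltn^~ n) s = count (ltn^~ m) s + count (fun k => m <= k < n) s.
Proof.
move=> le_mn; rewrite -count_predUI (eq_count (a1 := predI _ _) (a2 := pred0)).
  rewrite count_pred0 addn0; apply: eq_count => k /=.
  by case: (ltnP k m) => // lt_km; apply: leq_trans le_mn.
by move=> k /=; case: ltnP.
Qed.

Lemma leq_count_ltn (s : seq nat) n m : m \in s ->
  (count (ltn^~ n) s <= count (ltn^~ m) s) = (n <= m).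
Proof.
move=> s_m; case: (leqP n m) => [le_nm | lt_mn].
  by apply: sub_count => k /= /leq_trans; apply.
apply/negbTE; rewrite -ltnNge (count_ltn_split _ (ltnW lt_mn)) -addn1 leq_add2l.
by rewrite -has_count; apply/hasP; exists m; rewrite //= leqnn.
Qed.

Lemma count_ltn_onto (s : seq nat) : uniq s -> forall N j, j < count (ltn^~ N) s ->
  exists2 x, x \in s & count (ltn^~ x) s = j.
Proof.
move=> uniq_s; elim=> [|N IH] j; first by rewrite (eq_count (a2 := pred0)) ?count_pred0.
rewrite (count_ltn_split _ (leqnSn N)).
rewrite (eq_count (a1 := fun k => N <= k < N.+1) (a2 := pred1 N)) => [|k]; last first.
  by rewrite /= ltnS -eqn_leq eq_sym.
rewrite count_uniq_mem //; case: (boolP (N \in s)) => [s_N|_]; last by rewrite addn0; apply: IH.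
by rewrite addn1 ltnS leq_eqVlt => /orP [/eqP ->|]; [exists N | apply: IH].
Qed.

Lemma count_ltn_le (s : seq nat) N : uniq s -> count (ltn^~ N) s <= N.
Proof.
move=> uniq_s; rewrite -size_filter -[leqRHS](size_iota 0 N).
apply: uniq_leq_size => [|k]; first exact: filter_uniq.
by rewrite mem_filter mem_iota => /andP [].
Qed.

Section Compression.
Variables (P : finType) (r : valuation P -> rank).

Definition used_ranks : seq nat := undup (pmap r (enum (valuation P))).

Lemma mem_used_ranks n : reflect (exists u, r u = Some n) (n \in used_ranks).
Proof.
rewrite mem_undup mem_pmap; apply: (iffP mapP) => [[u _ ->]|[u <-]]; first by exists u.
by exists u; rewrite ?mem_enum.
Qed.

Definition compress (u : valuation P) : rank :=
  omap (fun n => count (ltn^~ n) used_ranks) (r u).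

Lemma compress_convex : convex compress.
Proof.
move=> u c; rewrite /compress; case: (r u) => //= N [<-] j /count_ltn_onto.
case=> [|x /mem_used_ranks [v rv] <-]; first exact: undup_uniq.
by exists v; rewrite rv.
Qed.

Lemma compress_le u : rank_le (compress u) (r u).
Proof. by rewrite /compress; case: (r u) => //= N; apply/count_ltn_le/undup_uniq. Qed.

Lemma rank_sat_compress phi : rank_sat r phi -> rank_sat compress phi.
Proof.
apply: rank_sat_omap => u v n m _ rv; apply: leq_count_ltn.
by apply/mem_used_ranks; exists v.
Qed.

End Compression.

Definition decide (Q : Prop) : bool := if excluded_middle_informative Q then true else false.

Lemma decideP (Q : Prop) : reflect Q (decide Q).
Proof. by rewrite /decide; case: excluded_middle_informative => ?; constructor. Qed.

Section MinimumModel.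
Variables (P : finType) (Kb : klm P -> Prop).

Definition model_rank (u : valuation P) (n : nat) : Prop :=
  exists2 R, rmodel Kb R & rk R u = Some n.

Definition inf_rank (u : valuation P) : rank :=
  if excluded_middle_informative (exists n, decide (model_rank u n)) is left ex
  then Some (ex_minn ex) else None.

Lemma inf_rank_attained u n : inf_rank u = Some n -> model_rank u n.
Proof.
rewrite /inf_rank; case: excluded_middle_informative => // ex [<-].
by case: ex_minnP => m /decideP.
Qed.

Lemma inf_rank_le R u : rmodel Kb R -> rank_le (inf_rank u) (rk R u).
Proof.
move=> model_R; case Ru: (rk R u) => [n|]; last by case: (inf_rank u).
have: decide (model_rank u n) by apply/decideP; exists R.
rewrite /inf_rank; case: excluded_middle_informative => [ex|no_ex] n_ok.
  by case: ex_minnP => m _; apply.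
by case: no_ex; exists n.
Qed.

Lemma rank_sat_inf_rank phi :
  (forall R, rmodel Kb R -> rsat R phi) -> rank_sat inf_rank phi.
Proof.
elim: phi => [a|a b|p IHp q IHq] /= sat_phi.
- move=> u; case iu: (inf_rank u) => [n|] // _.
  have [R model_R Ru] := inf_rank_attained iu.
  by apply: (sat_phi R model_R); rewrite Ru.
- move=> u n iu a_u min_u.
  have [R model_R Ru] := inf_rank_attained iu.
  apply: (sat_phi R model_R u n Ru a_u) => v m Rv a_v.
  have := inf_rank_le v model_R; rewrite Rv.
  by case iv: (inf_rank v) => [k|] //= /(leq_trans (min_u v k iv a_v)).
- by split; [apply: IHp | apply: IHq] => R /sat_phi [].
Qed.

Lemma minimum_model_exists : exists R, minimum_model Kb R.
Proof.
exists (RInterp (@compress_convex _ inf_rank)); split => [phi Kb_phi | R model_R u] /=.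
  by rewrite rsatE; apply/rank_sat_compress/rank_sat_inf_rank => R; apply.
exact: rank_le_trans (compress_le _ u) (inf_rank_le u model_R).
Qed.

Lemma RC_minimum : minimum_model Kb (RC Kb).
Proof. exact: epsilon_spec minimum_model_exists. Qed.

End MinimumModel.

Theorem lemma5 (P : finType) (St : Type) (star : St) (K : kb P St) :
  is_model (M_RC star K) K.
Proof.
move=> [s phi|s phi|s1 s2] K_st _ /=.
- move=> [[t|t psi] _] /= t_s; apply: (RC_minimum _).1; last left; by exists s.
- by exists (exist _ (PiD s phi) K_st); [apply: prec_refl | apply: (RC_minimum _).1; right].
- by move=> pi pi_s1; apply: prec_trans pi_s1 (prec_stmt star K_st).
Qed.
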